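(* Consider Algorithm 3 (described in the context) under the Standing Assumption, Matrix Assumption, Gradient Assumption and the event $E_{\tau,small}$ assumption of the context. Then for all $k\ge\bar k_{\tau,\xi}$, $$\mathbb{E}_{k,\tau,small}[\Delta q(x_k,\bar\tau_k,\bar g_k,H_k,\bar d_k)]\le\Delta q(x_k,\bar\tau_{\min},g_k,H_k,d_k)+\bar\tau_{\min}\zeta^{-1}M.$$
   Context: Problem: $\min_x f(x)$ s.t. $c(x)=0$, $f(x)=\mathbb{E}[F(x,\omega)]$, $c:\mathbb{R}^n\to\mathbb{R}^m$ deterministic. Notation: $g_k=\nabla f(x_k)$, $c_k=c(x_k)$, $J_k=\nabla c(x_k)^T$; $\Delta q(x,\tau,g,H,d)=-\tau(g^Td+\frac12\max\{d^THd,0\})+\|c(x)\|_1$. Standing Assumption: an open convex set $\mathcal X$ contains all iterates; $f$ is $C^1$, bounded below on $\mathcal X$, $\nabla f$ bounded and $L$-Lipschitz on $\mathcal X$; $c$, $\nabla c^T$ bounded on $\mathcal X$; $\nabla c_i$ is $\gamma_i$-Lipschitz on $\mathcal X$; singular values of $\nabla c(x)^T$ bounded away from zero uniformly over $\mathcal X$; $\Gamma:=\sum_i\gamma_i$. Matrix Assumption: deterministic symmetric $H_k$, chosen independently of the stochastic gradients, with $\|H_k\|_2\le\kappa_H$ and $u^TH_ku\ge\zeta\|u\|_2^2$ whenever $J_ku=0$. Algorithm 3 (inputs $x_0$, $\bar\tau_{-1}>0$, $\epsilon,\sigma\in(0,1)$, $\bar\xi_{-1}>0$, $\{\beta_k\}\subset(0,1]$,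 $\theta\ge0$): at iteration $k$, obtain stochastic gradient $\bar g_k$; $(\bar d_k,\bar y_k)$ solves $H_k\bar d_k+J_k^T\bar y_k=-\bar g_k$, $J_k\bar d_k=-c_k$ (assumed $\bar d_k\neq0$). $\bar\tau_k^{trial}=\infty$ if $\bar g_k^T\bar d_k+\max\{\bar d_k^TH_k\bar d_k,0\}\le0$, else $\frac{(1-\sigma)\|c_k\|_1}{\bar g_k^T\bar d_k+\max\{\bar d_k^TH_k\bar d_k,0\}}$; $\bar\tau_k=\bar\tau_{k-1}$ if $\bar\tau_{k-1}\le\bar\tau_k^{trial}$, else $(1-\epsilon)\bar\tau_k^{trial}$. $\bar\xi_k^{trial}=\frac{\Delta q(x_k,\bar\tau_k,\bar g_k,H_k,\bar d_k)}{\bar\tau_k\|\bar d_k\|_2^2}$; $\bar\xi_k=\bar\xi_{k-1}$ if $\bar\xi_{k-1}\le\bar\xi_k^{trial}$, else $(1-\epsilon)\bar\xi_k^{trial}$. With $D_k=(\bar\tau_kL+\Gamma)\|\bar d_k\|_2^2$, $\hat a_k=\beta_k\Delta q(x_k,\bar\tau_k,\bar g_k,H_k,\bar d_k)/D_k$, $\tilde a_k=\hat a_k-4\|c_k\|_1/D_k$, project both onto $[a_k,a_k+\theta\beta_k^2]$ with $a_k=\frac{\beta_k\bar\xi_k\bar\tau_k}{\bar\tau_kL+\Gamma}$ to get $\widehat\alpha_k,\widetilde\alpha_k$; $\bar\alpha_k=\widehat\alpha_k$ if $\widehat\alpha_k<1$, $1$ if $\widetilde\alpha_k\le1\le\widehat\alpha_k$,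 $\widetilde\alpha_k$ if $\widetilde\alpha_k>1$; $x_{k+1}=x_k+\bar\alpha_k\bar d_k$. $\bar\xi_{\min}$ denotes the limit of the nonincreasing positive sequence $\{\bar\xi_k\}$. Gradient Assumption: $\mathbb{E}_k[\bar g_k]=g_k$, $\mathbb{E}_k[\|\bar g_k-g_k\|_2^2]\le M$, with $\mathbb{E}_k$ conditioned on reaching $x_k$ at iteration $k$. Deterministic counterparts: $(d_k,y_k)$ solves $H_kd_k+J_k^Ty_k=-g_k$, $J_kd_k=-c_k$; $\tau_k^{trial}=\infty$ if $g_k^Td_k+\max\{d_k^TH_kd_k,0\}\le0$, else $\frac{(1-\sigma)\|c_k\|_1}{g_k^Td_k+\max\{d_k^TH_kd_k,0\}}$. Event $E_{\tau,small}$ assumption: there exist $\bar k_{\tau,\xi}\in\mathbb{N}$ and $\bar\tau_{\min}>0$ with $\bar\tau_k=\bar\tau_{\min}\le\tau_k^{trial}$ and $\bar\xi_k=\bar\xi_{\min}$ for all $k\ge\bar k_{\tau,\xi}$; moreover for $k\ge\bar k_{\tau,\xi}$, $\mathbb{E}_{k,\tau,small}[\bar g_k]=g_k$ and $\mathbb{E}_{k,\tau,small}[\|\bar g_k-g_k\|_2^2]\le M$, where $\mathbb{E}_{k,\tau,small}$ is expectation w.r.t. $\omega$ conditioned on this event and on the algorithm having reached $x_k$ at iteration $k$. *)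

From HB Require Import structures.
From mathcomp Require Import all_boot all_order all_algebra.
From mathcomp Require Import all_classical all_reals all_analysis.
Set Implicit Arguments. Unset Strict Implicit. Unset Printing Implicit Defensive.
Import Order.TTheory GRing.Theory Num.Theory.
Local Open Scope ring_scope.

Section Defs.
Variable R : realType.

Definition dot (n : nat) (u v : 'cV[R]_n) : R := (u^T *m v) 0 0.
Definition sqnorm (n : nat) (u : 'cV[R]_n) : R := dot u u.
Definition norm1 (m : nat) (u : 'cV[R]_m) : R := \sum_i `|u i 0|.
Definition quad (n : nat) (H : 'M[R]_n) (d : 'cV[R]_n) : R := dot d (H *m d).

(* Delta q(x, tau, g, H, d) = -tau (g^T d + 1/2 max{d^T H d, 0}) + ||c(x)||_1,
   where cx stands for c(x). *)
Definition Dq (n m : nat) (cx : 'cV[R]_m) (tau : R) (g : 'cV[R]_n)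
    (H : 'M[R]_n) (d : 'cV[R]_n) : R :=
  - tau * (dot g d + 2^-1 * Num.max (quad H d) 0) + norm1 cx.

(* denominator g^T d + max{d^T H d, 0} of the merit parameter trial value *)
Definition tau_den (n : nat) (g : 'cV[R]_n) (H : 'M[R]_n) (d : 'cV[R]_n) : R :=
  dot g d + Num.max (quad H d) 0.

(* "tau <= tau^trial", where tau^trial = +oo if the denominator is <= 0,
   and (1 - sigma) ||c||_1 / den otherwise *)
Definition le_tau_trial (n m : nat) (sigma tau : R) (cx : 'cV[R]_m)
    (g : 'cV[R]_n) (H : 'M[R]_n) (d : 'cV[R]_n) : Prop :=
  tau_den g H d <= 0 \/ tau <= (1 - sigma) * norm1 cx / tau_den g H d.

Definition tau_update (n m : nat) (eps sigma tau_prev : R) (cx : 'cV[R]_m)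
    (g : 'cV[R]_n) (H : 'M[R]_n) (d : 'cV[R]_n) : R :=
  if tau_den g H d <= 0 then tau_prev
  else let tr := (1 - sigma) * norm1 cx / tau_den g H d in
       if tau_prev <= tr then tau_prev else (1 - eps) * tr.

Definition xi_update (n m : nat) (eps xi_prev tau : R) (cx : 'cV[R]_m)
    (g : 'cV[R]_n) (H : 'M[R]_n) (d : 'cV[R]_n) : R :=
  let tr := Dq cx tau g H d / (tau * sqnorm d) in
  if xi_prev <= tr then xi_prev else (1 - eps) * tr.

End Defs.

From HB Require Import structures.
From mathcomp Require Import all_boot all_order all_algebra.
From mathcomp Require Import all_classical all_reals all_analysis.
From mathcomp Require Import ring lra.
Import Order.TTheory GRing.Theory Num.Theory.
Set Implicit Arguments. Unset Strict Implicit. Unset Printing Implicit Defensive.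
Local Open Scope ring_scope.

(* Write [gbar = g + e], [dbar = d + u].  Subtracting the two Newton-KKT
   systems shows that [u] lies in the null space of [J] and solves the saddle
   point system with right-hand side [-e]; hence [u^T H u = - e^T u], and the
   curvature of [H] on [ker J] gives [u^T H u <= ||e||^2 / zeta].  Expanding
   [Dq] around [(g, d)] then bounds [Dq tau gbar dbar] pointwise by
   [Dq tau g d - tau e^T a + tau ||e||^2 / zeta] for a vector [a] independent
   of the sample: [a = d] when [d^T H d >= 0], and otherwise [a = d + p], where
   [p] is the null-space solution with right-hand side [-g], which by symmetry
   of the saddle point matrix satisfies [g^T u = e^T p].  The middle term has
   mean zero and the last one has mean at most [tau M / zeta].  On the event
   E_{tau,small} the merit parameter equals [tau_min] for every sample. *)

Section Dot.
Variable R : realType.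

Lemma dotE n (u v : 'cV[R]_n) : dot u v = \sum_i u i 0 * v i 0.
Proof. by rewrite /dot mxE; apply: eq_bigr => i _; rewrite mxE. Qed.

Lemma dotC n (u v : 'cV[R]_n) : dot u v = dot v u.
Proof. by rewrite !dotE; apply: eq_bigr => i _; rewrite mulrC. Qed.

Lemma dotDl n (u v w : 'cV[R]_n) : dot (u + v) w = dot u w + dot v w.
Proof. by rewrite /dot linearD mulmxDl mxE. Qed.

Lemma dotDr n (u v w : 'cV[R]_n) : dot w (u + v) = dot w u + dot w v.
Proof. by rewrite /dot mulmxDr mxE. Qed.

Lemma dotNr n (u w : 'cV[R]_n) : dot w (- u) = - dot w u.
Proof. by rewrite /dot mulmxN mxE. Qed.

Lemma dotBr n (u v w : 'cV[R]_n) : dot w (u - v) = dot w u - dot w v.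
Proof. by rewrite dotDr dotNr. Qed.

Lemma dot0l n (w : 'cV[R]_n) : dot 0 w = 0.
Proof. by rewrite /dot trmx0 mul0mx mxE. Qed.

Lemma dotZl n a (u w : 'cV[R]_n) : dot (a *: u) w = a * dot u w.
Proof. by rewrite /dot linearZ /= -scalemxAl mxE. Qed.

Lemma dotZr n a (u w : 'cV[R]_n) : dot w (a *: u) = a * dot w u.
Proof. by rewrite dotC dotZl dotC. Qed.

Lemma dot_mulmxr p q (A : 'M[R]_(p, q)) (u : 'cV[R]_p) (v : 'cV[R]_q) :
  dot u (A *m v) = dot (A^T *m u) v.
Proof. by rewrite /dot trmx_mul trmxK mulmxA. Qed.

Lemma sqnorm_ge0 n (u : 'cV[R]_n) : 0 <= sqnorm u.
Proof. by rewrite /sqnorm dotE; apply: sumr_ge0 => i _; rewrite -expr2 sqr_ge0. Qed.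

Lemma sqnorm_eq0 n (u : 'cV[R]_n) : sqnorm u = 0 -> u = 0.
Proof.
rewrite /sqnorm dotE => /psumr_eq0P u0; apply/matrixP => i j.
rewrite (ord1 j) mxE; apply/eqP; rewrite -sqrf_eq0 expr2.
by rewrite u0 // => k _; rewrite -expr2 sqr_ge0.
Qed.

Lemma sqnormD n (u v : 'cV[R]_n) :
  sqnorm (u + v) = sqnorm u + 2 * dot u v + sqnorm v.
Proof. by rewrite /sqnorm !(dotDl, dotDr) [dot v u]dotC; ring. Qed.

Lemma sqnormZ n a (u : 'cV[R]_n) : sqnorm (a *: u) = a ^+ 2 * sqnorm u.
Proof. by rewrite /sqnorm dotZl dotZr mulrA -expr2. Qed.

End Dot.

Section SaddlePoint.
Variables (R : realType) (n m : nat).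
Variables (H : 'M[R]_n) (J : 'M[R]_(m, n)) (zeta : R).
Hypotheses (HT : H^T = H) (zeta_gt0 : 0 < zeta).
Hypothesis H_curv : forall u, J *m u = 0 -> zeta * sqnorm u <= quad H u.

Lemma dot_ker_trmx (u : 'cV[R]_n) (z : 'cV[R]_m) :
  J *m u = 0 -> dot u (J^T *m z) = 0.
Proof. by rewrite dot_mulmxr trmxK => ->; rewrite dot0l. Qed.

Lemma saddle_unitmx : \rank J = m -> block_mx H J^T J 0 \in unitmx.
Proof.
move=> rankJ; set K := block_mx _ _ _ _.
have KT : K^T = K by rewrite tr_block_mx HT trmxK trmx0.
rewrite -row_free_unit; apply: inj_row_free => v vK.
have /eqP : K *m v^T = 0 by rewrite -KT -trmx_mul vK trmx0.
rewrite -[v^T]vsubmxK mul_block_col mul0mx addr0 -col_mx0 => /eqP/eq_col_mx.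
set a := usubmx _; set b := dsubmx _; move=> [Ha Ja].
have a0 : a = 0.
  apply: sqnorm_eq0; apply/eqP; rewrite eq_le sqnorm_ge0 andbT.
  rewrite -(pmulr_rle0 _ zeta_gt0); apply: le_trans (H_curv Ja) _.
  have -> : quad H a = - dot a (J^T *m b).
    by rewrite /quad -dotNr; congr dot; apply/eqP; rewrite -addr_eq0 Ha.
  by rewrite dot_ker_trmx ?oppr0.
have b0 : b = 0.
  have rowfreeJ : row_free J by rewrite /row_free rankJ.
  apply: trmx_inj; apply/eqP; rewrite trmx0 -(mulmx_free_eq0 _ rowfreeJ).
  have Jb : J^T *m b = 0 by move: Ha; rewrite a0 mulmx0 add0r.
  by rewrite -[J]trmxK -trmx_mul Jb trmx0.
by apply: trmx_inj; rewrite -[v^T]vsubmxK -/a -/b a0 b0 col_mx0 trmx0.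
Qed.

Lemma saddle_solvable (r : 'cV[R]_n) :
  \rank J = m -> exists p q, H *m p + J^T *m q = r /\ J *m p = 0.
Proof.
move=> /saddle_unitmx unitK.
set x := invmx (block_mx H J^T J 0) *m col_mx r 0.
exists (usubmx x), (dsubmx x).
have := mulKVmx unitK (col_mx r 0).
by rewrite -/x -{1}[x]vsubmxK mul_block_col mul0mx addr0 => /eq_col_mx.
Qed.

Lemma quad_ker_ge0 u : J *m u = 0 -> 0 <= quad H u.
Proof.
by move=> Ju; exact: le_trans (mulr_ge0 (ltW zeta_gt0) (sqnorm_ge0 u)) (H_curv Ju).
Qed.

Section KernelStep.
Variables (u e : 'cV[R]_n) (v : 'cV[R]_m).
Hypotheses (Ju : J *m u = 0) (Hu : H *m u + J^T *m v = - e).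

Let Hu_eq : H *m u = - e - J^T *m v. Proof. by rewrite -Hu addrK. Qed.

Lemma quad_ker_step : quad H u = - dot e u.
Proof. by rewrite /quad Hu_eq dotBr dot_ker_trmx // subr0 dotNr dotC. Qed.

Lemma quad_ker_step_le : quad H u <= zeta^-1 * sqnorm e.
Proof.
rewrite ler_pdivlMl //.
have := sqnorm_ge0 (zeta *: u + e).
rewrite sqnormD sqnormZ dotZl dotC -[dot e u]opprK -quad_ker_step.
have := ler_wpM2l (ltW zeta_gt0) (H_curv Ju).
rewrite expr2; move: (sqnorm u) (quad H u) => s Q; lra.
Qed.

Lemma dot_ker_step_sym (p g : 'cV[R]_n) (q : 'cV[R]_m) :
  J *m p = 0 -> H *m p + J^T *m q = - g -> dot g u = dot e p.
Proof.
move=> Jp Hp.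
have : dot u (H *m p) = dot (H *m u) p by rewrite dot_mulmxr HT.
have -> : H *m p = - g - J^T *m q by rewrite -Hp addrK.
rewrite Hu_eq dotBr dot_ker_trmx // [dot (_ - _) p]dotC dotBr dot_ker_trmx //.
by rewrite !subr0 !dotNr dotC [dot p _]dotC => /oppr_inj.
Qed.

End KernelStep.

Lemma quadD (d u : 'cV[R]_n) :
  quad H (d + u) = quad H d + 2 * dot u (H *m d) + quad H u.
Proof.
rewrite /quad mulmxDr !(dotDl, dotDr) [dot d (H *m u)]dot_mulmxr HT.
by rewrite [dot (H *m d) u]dotC; ring.
Qed.

Lemma Dq_perturb_le (c : 'cV[R]_m) tau
    (g d gb db p : 'cV[R]_n) (y yb q : 'cV[R]_m) :
  0 < tau ->
  H *m d + J^T *m y = - g -> J *m d = - c ->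
  H *m db + J^T *m yb = - gb -> J *m db = - c ->
  H *m p + J^T *m q = - g -> J *m p = 0 ->
  Dq c tau gb H db <= Dq c tau g H d
     - tau * dot (gb - g) (if 0 <= quad H d then d else d + p)
     + tau * zeta^-1 * sqnorm (gb - g).
Proof.
move=> tau_gt0 Hd Jd Hdb Jdb Hp Jp.
have [e gbE] : exists e, gb = g + e by exists (gb - g); rewrite addrC subrK.
have [u dbE] : exists u, db = d + u by exists (db - d); rewrite addrC subrK.
have [v ybE] : exists v, yb = y + v by exists (yb - y); rewrite addrC subrK.
subst gb db yb; rewrite [g + e - g]addrC addKr.
have Ju : J *m u = 0.
  by apply: (addrI (- c)); rewrite addr0 -{1}Jd -mulmxDr.
have Hu : H *m u + J^T *m v = - e.
  by apply: (addrI (- g)); rewrite -{1}Hd addrACA -!mulmxDr Hdb opprD.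
have uHd : dot u (H *m d) = - dot g u.
  have -> : H *m d = - g - J^T *m y by rewrite -Hd addrK.
  by rewrite dotBr dot_ker_trmx // subr0 dotNr dotC.
have Qs := quad_ker_step_le Ju Hu.
have Q0 := quad_ker_ge0 Ju.
have eu : dot e u = - quad H u by rewrite (quad_ker_step Ju Hu) opprK.
rewrite /Dq quadD uHd !(dotDl, dotDr) eu.
set X := _ + quad H u.
have tauQ := ler_wpM2l (ltW tau_gt0) Qs.
case: ifP => [Hd_ge0 | /negbT Hd_lt0].
  have : X <= Num.max X 0 by rewrite le_max lexx.
  move/(ler_wpM2l (ltW tau_gt0)).
  rewrite (max_idPl Hd_ge0) /X; nra.
have : 0 <= Num.max X 0 by rewrite le_max lexx orbT.
move/(ler_wpM2l (ltW tau_gt0)); rewrite mulr0.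
have -> : Num.max (quad H d) 0 = 0 by apply/max_idPr; rewrite ltW // ltNge.
rewrite dotDr -(dot_ker_step_sym Ju Hu Jp Hp); nra.
Qed.

End SaddlePoint.

(* No measurability is needed: an integral is the difference of the suprema of
   the integrals of simple functions below the positive and negative parts. *)
Lemma le_integral_pointwise (R : realType) (d : measure_display)
    (T : measurableType d) (mu : {measure set T -> \bar R}) (F G : T -> \bar R) :
  (forall x, F x <= G x)%E -> (\int[mu]_x F x <= \int[mu]_x G x)%E.
Proof.
move=> FG; rewrite /integral !patch_setT.
apply: leeB; apply: ereal_sup_le => _ [h /= hF <-]; exists h => //= x.
- apply: le_trans (hF x) _; apply: (@funepos_le _ _ setT) => [y _|].
  + exact: FG.
  + exact: in_setT.
- apply: le_trans (hF x) _; apply: (@funeneg_le _ _ setT) => [y _|].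
  + exact: FG.
  + exact: in_setT.
Qed.

Section CenteredGradient.
Variables (R : realType) (d : measure_display) (Omega : measurableType d).
Variables (P : probability Omega R) (n : nat).
Variables (gbar : Omega -> 'cV[R]_n) (g : 'cV[R]_n).
Hypothesis gbar_meas : forall i, measurable_fun setT (fun w => gbar w i 0).
Hypothesis gbar_int : forall i, P.-integrable setT (fun w => (gbar w i 0)%:E).
Hypothesis gbar_mean : forall i, (\int[P]_w (gbar w i 0)%:E = (g i 0)%:E)%E.

Let integrable_cst (k : R) : P.-integrable setT (fun=> k%:E).
Proof. exact: finite_measure_integrable_cst. Qed.

Let integral_cst (k : R) : (\int[P]_w k%:E = k%:E)%E.
Proof.
have P1 : ((P : {measure set Omega -> \bar R}) setT = 1)%E by exact: probability_setT.
by rewrite integral_cst // P1 mule1.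
Qed.

Let dot_centeredE a w : (dot (gbar w - g) a)%:E =
  (\sum_i (a i 0)%:E * ((gbar w i 0)%:E - (g i 0)%:E))%E.
Proof. by rewrite dotE -sumEFin; apply: eq_bigr => i _; rewrite !mxE mulrC. Qed.

Let integrable_centered_coord i :
  P.-integrable setT (fun w => (gbar w i 0)%:E - (g i 0)%:E)%E.
Proof. exact: integrableB. Qed.

Lemma integrable_dot_centered a :
  P.-integrable setT (fun w => (dot (gbar w - g) a)%:E).
Proof.
under eq_fun do rewrite dot_centeredE.
by apply: integrable_sum => // i _; apply: integrableZl.
Qed.

Lemma integral_dot_centered a : (\int[P]_w (dot (gbar w - g) a)%:E = 0)%E.
Proof.
under eq_integral do rewrite dot_centeredE.
rewrite integral_sum //; last by move=> i; apply: integrableZl.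
apply: big1 => i _; rewrite integralZl // integralB //.
by rewrite gbar_mean integral_cst subee // mule0.
Qed.

Lemma measurable_sqnorm_centered :
  measurable_fun setT (fun w => sqnorm (gbar w - g)).
Proof.
rewrite /sqnorm; under eq_fun do rewrite dotE.
apply: measurable_sum => i.
rewrite /= (_ : (fun _ => _) = fun w => (gbar w i 0 - g i 0) ^+ 2).
  apply: measurable_realfun.measurable_funX.
  exact: measurable_realfun.measurable_funB.
by apply/funext => w; rewrite !mxE expr2.
Qed.

Lemma integral_le_centered_bound (F : Omega -> R) a (C t s M : R) :
  0 <= s -> (\int[P]_w (sqnorm (gbar w - g))%:E <= M%:E)%E ->
  (forall w, F w <= C - t * dot (gbar w - g) a + s * sqnorm (gbar w - g)) ->
  (\int[P]_w (F w)%:E <= (C + s * M)%:E)%E.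
Proof.
move=> s_ge0 sqM Fle.
have sq_int : P.-integrable setT (fun w => (sqnorm (gbar w - g))%:E).
  apply/integrableP; split.
    exact/measurable_realfun.measurable_EFinP/measurable_sqnorm_centered.
  under eq_integral do rewrite gee0_abs ?lee_fin ?sqnorm_ge0 //.
  exact: le_lt_trans sqM (ltry _).
apply: (@le_trans _ _ (\int[P]_w (C%:E - t%:E * (dot (gbar w - g) a)%:E
                                  + s%:E * (sqnorm (gbar w - g))%:E))%E).
  by apply: le_integral_pointwise => w; rewrite -!EFinM -EFinB -EFinD lee_fin.
have dot_int := integrable_dot_centered a.
rewrite integralD //; last 2 first.
- by apply: integrableB => //; apply: integrableZl.
- by apply: integrableZl.
rewrite integralB //; last by apply: integrableZl.
rewrite integral_cst !integralZl //.
rewrite integral_dot_centered mule0 sube0 EFinD leeD2l // EFinM.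
by apply: lee_wpmul2l; rewrite ?lee_fin.
Qed.

End CenteredGradient.

Theorem lemma3p11
  (R : realType) (n m : nat)
  (* problem functions and the current iterate x_k *)
  (f : 'cV[R]_n -> R) (c : 'cV[R]_n -> 'cV[R]_m) (xk : 'cV[R]_n)
  (* deterministic quantities at iteration k *)
  (gk : 'cV[R]_n) (Jk : 'M[R]_(m, n)) (Hk : 'M[R]_n)
  (dk : 'cV[R]_n) (yk : 'cV[R]_m)
  (* algorithm parameters *)
  (eps sigma kappaH zeta M : R)
  (tau_prev tau_min xi_prev xi_min : R)
  (* conditional probability E_{k,tau,small} and the stochastic gradient *)
  (d0 : measure_display) (Omega : measurableType d0)
  (P : probability Omega R)
  (gbar : Omega -> 'cV[R]_n) (dbar : Omega -> 'cV[R]_n) (ybar : Omega -> 'cV[R]_m) :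
  (* Standing Assumption (at x_k): g_k = grad f(x_k), J_k = grad c(x_k)^T,
     J_k has full row rank *)
  (forall v : 'cV[R]_n, is_derive xk v f (dot gk v)) ->
  (forall v : 'cV[R]_n, is_derive xk v c (Jk *m v)) ->
  \rank Jk = m ->
  (* Matrix Assumption *)
  Hk^T = Hk ->
  0 < zeta ->
  (forall u : 'cV[R]_n, sqnorm (Hk *m u) <= kappaH ^+ 2 * sqnorm u) ->
  (forall u : 'cV[R]_n, Jk *m u = 0 -> zeta * sqnorm u <= quad Hk u) ->
  (* algorithm parameters *)
  0 < eps < 1 -> 0 < sigma < 1 -> 0 < tau_min ->
  (* deterministic search direction *)
  Hk *m dk + Jk^T *m yk = - gk -> Jk *m dk = - c xk ->
  (* stochastic search direction (assumed nonzero) *)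
  (forall w, Hk *m dbar w + Jk^T *m ybar w = - gbar w) ->
  (forall w, Jk *m dbar w = - c xk) ->
  (forall w, dbar w != 0) ->
  (* Gradient assumption, under the conditional expectation E_{k,tau,small} *)
  (forall i : 'I_n, measurable_fun setT (fun w => gbar w i 0)) ->
  (forall i : 'I_n, P.-integrable setT (fun w => (gbar w i 0)%:E)) ->
  (forall i : 'I_n, (\int[P]_w (gbar w i 0)%:E = (gk i 0)%:E)%E) ->
  (\int[P]_w (sqnorm (gbar w - gk))%:E <= M%:E)%E ->
  (* event E_{tau,small} at iteration k >= kbar_{tau,xi} *)
  (forall w, tau_update eps sigma tau_prev (c xk) (gbar w) Hk (dbar w) = tau_min) ->
  le_tau_trial sigma tau_min (c xk) gk Hk dk ->
  (forall w, xi_update eps xi_prev tau_min (c xk) (gbar w) Hk (dbar w) = xi_min) ->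
  (* conclusion *)
  (\int[P]_w (Dq (c xk) (tau_update eps sigma tau_prev (c xk) (gbar w) Hk (dbar w))
                 (gbar w) Hk (dbar w))%:E
   <= (Dq (c xk) tau_min gk Hk dk + tau_min * zeta^-1 * M)%:E)%E.
Proof.
move=> _ _ rankJ HT zeta_gt0 _ H_curv _ _ tau_gt0 Hd Jd Hdb Jdb _
  gbar_meas gbar_int gbar_mean sqM tau_eq _ _.
have [p [q [Hp Jp]]] := saddle_solvable HT zeta_gt0 H_curv (- gk) rankJ.
under eq_integral do rewrite tau_eq.
apply: (integral_le_centered_bound gbar_meas gbar_int gbar_mean
  (a := if 0 <= quad Hk dk then dk else dk + p) (t := tau_min) _ sqM) => [|w].
  by rewrite mulr_ge0 ?invr_ge0 ?ltW.
by have := Dq_perturb_le HT zeta_gt0 H_curv tau_gt0 Hd Jd (Hdb w) (Jdb w) Hp Jp.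
Qed.
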